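(* Let $\tilde Q=\|q_{ik}\|$ ($k\in\mathbb N$, $i\in\{0,\dots,N_k-1\}$) define a $\tilde Q$-expansion of $[0,1]$. Suppose that for every sequence of digits $(i_k)_{k\ge1}$ with $i_k\in\{0,\dots,N_k-1\}$, $$\lim_{k\to\infty}\frac{\ln q_{i_kk}}{\ln\bigl(q_{i_11}q_{i_22}\cdots q_{i_{k-1}(k-1)}\bigr)}=0.$$ Then the family $\varPhi$ of interiors of the cylinders of this expansion is faithful for packing dimension calculation: $\dim_P(E,\varPhi)=\dim_{P(\mathit{unc})}(E)$ for every $E\subset[0,1]$.
   Context: $\tilde Q$-expansion: integers $N_k\ge2$, $q_{ik}>0$, $\sum_iq_{ik}=1$, $\prod_k\max_iq_{ik}=0$; with $\beta_{ik}=\sum_{l<i}q_{lk}$ each $x\in[0,1]$ is $x=\sum_k\beta_{a_kk}\prod_{j<k}q_{a_jj}$; the rank-$n$ cylinder $\{x:a_j(x)=c_j,j\le n\}$ is an interval of length $\prod_{j\le n}q_{c_jj}$. In $\mathbb R$: an uncentered $\varepsilon$-packing of $E$ is a countable family of pairwise disjoint open intervals of length $\le\varepsilon$ each meeting $E$; $\mathcal P^\alpha_{\varepsilon(\mathit{unc})}(E)=\sup\sum|E_i|^\alpha$, $\mathcal P^\alpha_{0(\mathit{unc})}=\lim_{\varepsilon\to0}$, $\mathcal P^\alpha_{(\mathit{unc})}(E)=\inf\{\sum_j\mathcal P^\alpha_{0(\mathit{unc})}(E_j):E\subset\bigcup E_j\}$, $\dim_{P(\mathit{unc})}(E)=\inf\{\alpha:\mathcal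 P^\alpha_{(\mathit{unc})}(E)=0\}$; $\dim_P(E,\varPhi)$ is the same using only packings by intervals from $\varPhi$. *)

From HB Require Import structures.
From mathcomp Require Import all_boot all_order all_algebra.
From mathcomp Require Import all_classical all_reals all_analysis.
Set Implicit Arguments. Unset Strict Implicit. Unset Printing Implicit Defensive.
Import Order.TTheory GRing.Theory Num.Theory.
Import numFieldNormedType.Exports.
Local Open Scope classical_set_scope.
Local Open Scope ring_scope.

Section Defs.
Variable R : realType.

(* A Q~-expansion of [0,1]; ranks are indexed from 0 (paper: from 1).
   q i k is q_{ik}, for digit i < N k. *)
Definition maxq (N : nat -> nat) (q : nat -> nat -> R) (k : nat) : R :=
  \big[Num.max/0]_(i < N k) q i k.

Definition Qexpansion (N : nat -> nat) (q : nat -> nat -> R) : Prop :=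
  [/\ (forall k, (2 <= N k)%N),
      (forall k i, (i < N k)%N -> 0 < q i k),
      (forall k, \sum_(i < N k) q i k = 1) &
      (fun n => \prod_(k < n) maxq N q k) @ \oo --> (0 : R)].

Definition beta (q : nat -> nat -> R) (i k : nat) : R := \sum_(l < i) q l k.

Definition cyl_left (q : nat -> nat -> R) (n : nat) (c : nat -> nat) : R :=
  \sum_(j < n) beta q (c j) j * \prod_(l < j) q (c l) l.
Definition cyl_len (q : nat -> nat -> R) (n : nat) (c : nat -> nat) : R :=
  \prod_(j < n) q (c j) j.

(* An open interval ]a,b[ is represented by the pair (a,b). *)
Definition oint (I : R * R) : set R := [set x | I.1 < x < I.2].

Definition cyl_interiors (N : nat -> nat) (q : nat -> nat -> R) : set (R * R) :=
  [set I | exists n c, (1 <= n)%N /\ (forall j, (j < n)%N -> (c j < N j)%N) /\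
     I = (cyl_left q n c, cyl_left q n c + cyl_len q n c)].

(* eps-packing of E by open intervals from the admissible family adm
   (adm = setT gives the uncentered packings). *)
Definition packing (adm : set (R * R)) (eps : R) (E : set R) (F : set (R * R)) : Prop :=
  [/\ countable F, F `<=` adm,
      (forall I, F I -> I.2 - I.1 <= eps /\ oint I `&` E !=set0) &
      (forall I J, F I -> F J -> I <> J -> oint I `&` oint J = set0)].

Definition Peps (adm : set (R * R)) (alpha eps : R) (E : set R) : \bar R :=
  ereal_sup [set (\esum_(I in F) ((I.2 - I.1) `^ alpha)%:E)%E
            | F in packing adm eps E].

(* P_0 = lim_{eps -> 0} P_eps, which (P_eps being monotone in eps) is the infimum *)
Definition P0 (adm : set (R * R)) (alpha : R) (E : set R) : \bar R :=
  ereal_inf [set Peps adm alpha eps E | eps in [set e : R | 0 < e]].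

Definition Pmeas (adm : set (R * R)) (alpha : R) (E : set R) : \bar R :=
  ereal_inf [set (\sum_(j <oo) P0 adm alpha (Es j))%E
            | Es in [set Es : nat -> set R | E `<=` \bigcup_j Es j]].

Definition dimP (adm : set (R * R)) (E : set R) : \bar R :=
  ereal_inf [set alpha%:E | alpha in [set a : R | 0 <= a /\ Pmeas adm a E = 0%E]].

End Defs.

(* Cylinder packings are uncentered packings, so dim_P(E, Phi) <= dim_P(E). Conversely,
   suppose the Phi-packing measure of exponent a vanishes on E and fix del > 0. Off the
   countable set of cylinder endpoints every x has a digit sequence, and the hypothesis on
   ln q / ln |I| says that eventually q_n(x) >= |I_n(x)|^del; hence the largest cylinder
   around x of length at most r has length at least r^(1+del). Replacing each interval of
   an uncentered packing at scale r by such a cylinder around one of its points turns it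
   into a cylinder packing, up to a factor 3: at most three disjoint intervals longer than
   r/2 meet a given interval of length at most r. Summing over the dyadic scales
   r = eps 2^-k bounds the uncentered packing sums of exponent b > (1+del) a by
   O(eps^(b - (1+del) a)), so the uncentered packing measure of exponent a + eps is 0. *)

From HB Require Import structures.
From mathcomp Require Import all_boot all_order all_algebra.
From mathcomp Require Import all_classical all_reals all_analysis.
From mathcomp Require Import zify lra.
Import Order.TTheory GRing.Theory Num.Theory.
Import numFieldNormedType.Exports.
Set Implicit Arguments. Unset Strict Implicit. Unset Printing Implicit Defensive.
Local Open Scope classical_set_scope.
Local Open Scope ring_scope.

Lemma count_le1 (T : eqType) (p : pred T) (s : seq T) : uniq s ->
  {in s &, forall x y, p x -> p y -> x = y} -> (count p s <= 1)%N.
Proof.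
elim: s => [//|a s IH] /= /andP [as_ us] eqp.
have eqp' : {in s &, forall x y, p x -> p y -> x = y}.
  by move=> x y xs ys; apply: eqp; rewrite inE ?xs ?ys orbT.
case: (boolP (p a)) => pa; last by rewrite add0n; exact: IH.
rewrite add1n ltnS leqNgt -has_count; apply/hasP => -[y ys py].
by move: as_; rewrite (eqp a y (mem_head _ _) _ pa py) ?ys // inE ys orbT.
Qed.

Lemma count_le_sum3 (T : eqType) (P p1 p2 p3 : pred T) (s : seq T) :
  {in s, forall x, P x -> [|| p1 x, p2 x | p3 x]} ->
  (count P s <= count p1 s + count p2 s + count p3 s)%N.
Proof.
elim: s => [//|x s IH] cover /=.
have {IH} := IH (fun y ys => cover y (mem_behead (s := x :: s) ys)).
case: (boolP (P x)) => [/(cover x (mem_head _ _))|_]; last by rewrite add0n; lia.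
by case/or3P => -> /=; lia.
Qed.

Section DyadicScales.
Variable R : realType.

Lemma sum_le_sum_classes (T : eqType) (s : seq T) (g : T -> R) (cls : nat -> pred T) :
  (forall x, 0 <= g x) -> {in s, forall x, exists k, cls k x} ->
  exists K, \sum_(x <- s) g x <= \sum_(k < K) \sum_(x <- s | cls k x) g x.
Proof.
move=> g_ge0 s_cls.
have [K sK] : exists K, {in s, forall x, exists2 k, (k < K)%N & cls k x}.
  elim: s s_cls => [|a s IH] s_cls; first by exists 0%N.
  have [K sK] := IH (fun x xs => s_cls x (mem_behead (s := a :: s) xs)).
  have [k ak] := s_cls a (mem_head _ _).
  exists (maxn K k.+1) => x; rewrite inE => /predU1P [->|xs].
    by exists k; rewrite // leq_max leqnn orbT.
  by have [j jK xj] := sK x xs; exists j; rewrite // leq_max jK.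
exists K; under [leRHS]eq_bigr => k _ do rewrite big_mkcond.
rewrite exchange_big /= big_seq [leRHS]big_seq; apply: ler_sum => x xs.
have [k kK xk] := sK x xs.
rewrite (bigD1 (Ordinal kK)) //= xk lerDl sumr_ge0 // => j _.
by case: ifP.
Qed.

Lemma powR_half_lt1 (rho : R) : 0 < rho -> 2^-1 `^ rho < 1.
Proof.
move=> rho_gt0; rewrite /powR invr_eq0 pnatr_eq0 /= expR_lt1 pmulr_rlt0 //.
by rewrite ln_lt0 // invr_gt0 ltr0n /= invf_lt1 // ltr1n.
Qed.

Lemma dyadic_scale (eps l : R) : 0 < l -> l <= eps ->
  exists k, eps / 2 ^+ k.+1 < l <= eps / 2 ^+ k.
Proof.
move=> l_gt0 l_le.
have eps_gt0 : 0 < eps := lt_le_trans l_gt0 l_le.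
have ex : exists k, eps / 2 ^+ k.+1 < l.
  pose n := Num.Def.archi_bound (eps / l).
  have eps_l : eps / l < n%:R by apply: archi_boundP; rewrite divr_ge0 // ltW.
  exists n; rewrite ltr_pdivrMr ?exprn_gt0 // mulrC -ltr_pdivrMr //.
  apply: lt_trans eps_l _; rewrite -natrX ltr_nat.
  exact: ltn_trans (ltnSn n) (ltn_expl _ (ltnSn 1)).
case: (ex_minnP ex) => k k_lt min_k; exists k; rewrite k_lt /=.
case: k {k_lt} min_k => [|k] min_k; first by rewrite expr0 divr1.
by rewrite leNgt; apply/negP => /min_k; rewrite ltnn.
Qed.

Lemma powR_dyadic (eps rho : R) k : 0 <= eps ->
  (eps / 2 ^+ k) `^ rho = eps `^ rho * (2^-1 `^ rho) ^+ k.
Proof.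
move=> eps_ge0; rewrite -exprVn powRM ?exprn_ge0 ?invr_ge0 ?ler0n //.
by rewrite -[2^-1 ^+ k]powR_mulrn ?invr_ge0 ?ler0n // powRAC powR_mulrn ?powR_ge0.
Qed.

End DyadicScales.

Section Packing.
Variable R : realType.
Implicit Types (adm : set (R * R)) (E F : set R) (I J y : R * R) (s : seq (R * R)).

Definition ilen I := I.2 - I.1.

Lemma oint_disjoint_le I J : I.1 < I.2 -> J.1 < J.2 ->
  oint I `&` oint J = set0 -> I.2 <= J.1 \/ J.2 <= I.1.
Proof.
move=> ltI ltJ disj; case: (lerP I.2 J.1) => [|h1]; first by left.
case: (lerP J.2 I.1) => [|h2]; first by right.
pose lo := Num.max I.1 J.1; pose hi := Num.min I.2 J.2.
have [mid_hi lo_mid] := @midf_lt _ lo hi ltac:(by rewrite gt_max !lt_min ltI ltJ h1 h2).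
suff : (oint I `&` oint J) ((lo + hi) / 2) by rewrite disj.
move: lo_mid mid_hi; rewrite gt_max lt_min => /andP [? ?] /andP [? ?].
by split; apply/andP.
Qed.

(* [Peps] only depends on finite packings, as [esum] is a supremum of finite sums; see
   [Peps_le] and [fin_packing_le_Peps]. *)
Definition fin_packing adm (eps : R) E s :=
  [/\ uniq s, {in s, forall I, adm I},
      {in s, forall I, ilen I <= eps /\ oint I `&` E !=set0} &
      {in s &, forall I J, I <> J -> oint I `&` oint J = set0}].

Lemma fin_packing_nil adm eps E : fin_packing adm eps E [::].
Proof. by split. Qed.

Lemma fin_packing_sub adm adm' eps eps' E E' s :
  adm `<=` adm' -> eps <= eps' -> E `<=` E' ->
  fin_packing adm eps E s -> fin_packing adm' eps' E' s.
Proof.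
move=> sadm le_eps sE [us sa sl sd]; split => // [I /sa /sadm // | I /sl [lI [z [zI zE]]]].
by split; [exact: le_trans le_eps | exists z; split => //; exact: sE].
Qed.

Lemma fin_packing_filter adm eps eps' E s (p : pred (R * R)) :
  fin_packing adm eps E s -> {in s, forall I, p I -> ilen I <= eps'} ->
  fin_packing adm eps' E [seq J <- s | p J].
Proof.
move=> [us sa sl sd] p_le; split => [|I|I|I J].
- exact: filter_uniq.
- by rewrite mem_filter => /andP [_ /sa].
- by rewrite mem_filter => /andP [pI Is]; split; [exact: p_le | exact: (sl I Is).2].
- by rewrite !mem_filter => /andP [_ Is] /andP [_ Js]; exact: sd.
Qed.

Lemma fin_packing_ilen_gt0 adm eps E s : fin_packing adm eps E s -> {in s, forall I, 0 < ilen I}.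
Proof.
by move=> [_ _ sl _] I /sl [_ [z [/andP [z1 z2] _]]]; rewrite subr_gt0 (lt_trans z1 z2).
Qed.

Lemma fin_packing_share adm eps E s : fin_packing adm eps E s ->
  {in s &, forall I J z, oint I z -> oint J z -> I = J}.
Proof.
move=> [_ _ _ sd] I J Is Js z zI zJ; apply: contrapT => neIJ.
by have := sd I J Is Js neIJ; rewrite -subset0 => /(_ z); apply.
Qed.

Definition pick_point E I : R := get (oint I `&` E).

Lemma pick_pointP adm eps E s : fin_packing adm eps E s ->
  {in s, forall I, oint I (pick_point E I) /\ E (pick_point E I)}.
Proof. by move=> [_ _ sl _] I /sl [_ ne]; exact: getPex ne. Qed.

(* An interval meeting [y] contains an endpoint of [y] or lies inside [y]; disjointness
   allows one interval of each kind, and the length bound forbids two inside [y]. *)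
Lemma count_meeting_le3 adm E (r : R) s y (P : pred (R * R)) :
  fin_packing adm r E s -> {in s, forall I, r / 2 < ilen I} -> ilen y <= r ->
  {in s, forall I, P I -> exists z, oint I z /\ oint y z} -> (count P s <= 3)%N.
Proof.
move=> sP long ly meet.
have [us _ _ sd] := sP; have share := fin_packing_share sP.
have pos I : I \in s -> I.1 < I.2 by move/(fin_packing_ilen_gt0 sP); rewrite subr_gt0.
pose p1 I := I.1 < y.1 < I.2; pose p2 I := I.1 < y.2 < I.2.
pose p3 I := (y.1 <= I.1) && (I.2 <= y.2).
have c1 : (count p1 s <= 1)%N by apply: count_le1 => // I J Is Js; exact: share.
have c2 : (count p2 s <= 1)%N by apply: count_le1 => // I J Is Js; exact: share.
have c3 : (count p3 s <= 1)%N.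
  apply: count_le1 => // I J Is Js /andP [yI1 yI2] /andP [yJ1 yJ2].
  apply: contrapT => neIJ; have := long I Is; have := long J Js.
  move: ly; rewrite /ilen.
  by case: (oint_disjoint_le (pos I Is) (pos J Js) (sd I J Is Js neIJ)); lra.
apply: leq_trans (count_le_sum3 (p1 := p1) (p2 := p2) (p3 := p3) _) _; last first.
  by rewrite -[3%N]/(1 + 1 + 1)%N !leq_add.
move=> I Is /(meet I Is) [z [/andP [zI1 zI2] /andP [zy1 zy2]]].
have [yI1|Iy1] := ltP I.1 y.1.
  by apply/or3P/Or31/andP; split => //; exact: lt_trans zy1 zI2.
have [yI2|Iy2] := ltP y.2 I.2.
  by apply/or3P/Or32/andP; split => //; exact: lt_trans zI1 zy2.
by apply/or3P/Or33/andP.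
Qed.

Lemma Peps_le adm a eps E (X : \bar R) :
  (forall s, fin_packing adm eps E s -> ((\sum_(I <- s) ilen I `^ a)%:E <= X)%E) ->
  (Peps adm a eps E <= X)%E.
Proof.
move=> le_X; apply: ge_ereal_sup => _ [F [_ Fadm Flen Fdisj] <-].
apply: ge_ereal_sup => _ [A [finA AF] <-]; move: AF.
have [s0 A_s0] := (finite_seqP A).1 finA.
have {A_s0}-> : A = [set` undup s0].
  by rewrite A_s0; apply/seteqP; split => x /=; rewrite mem_undup.
rewrite -fsbig_seq ?undup_uniq // sumEFin => AF; apply: le_X.
split => [|I /AF|I /AF|I J /AF FI /AF FJ]; [exact: undup_uniq|exact: Fadm|exact: Flen|].
exact: Fdisj.
Qed.

Lemma fin_packing_le_Peps adm a eps E s : fin_packing adm eps E s ->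
  ((\sum_(I <- s) ilen I `^ a)%:E <= Peps adm a eps E)%E.
Proof.
move=> [us sadm slen sdisj]; apply: le_ereal_sup_tmp.
exists (\esum_(I in [set` s]) ((I.2 - I.1) `^ a)%:E)%E.
  by exists [set` s] => //; split => //; exact: finite_set_countable (finite_seq s).
rewrite esum_fset; last by move=> i _; rewrite lee_fin powR_ge0.
  by rewrite -fsbig_seq // sumEFin.
exact: finite_seq.
Qed.

Lemma Peps_ge0 adm a eps E : (0 <= Peps adm a eps E)%E.
Proof. by have := fin_packing_le_Peps a (fin_packing_nil adm eps E); rewrite big_nil. Qed.

Lemma P0_ge0 adm a E : (0 <= P0 adm a E)%E.
Proof. by apply: le_ereal_inf_tmp => _ [e _ <-]; exact: Peps_ge0. Qed.

Lemma P0_le_Peps adm a E eps : 0 < eps -> (P0 adm a E <= Peps adm a eps E)%E.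
Proof. by move=> eps_gt0; apply: ereal_inf_lbound; exists eps. Qed.

Lemma Pmeas_ge0 adm a E : (0 <= Pmeas adm a E)%E.
Proof.
apply: le_ereal_inf_tmp => _ [Es _ <-]; apply: nneseries_ge0 => n _ _.
exact: P0_ge0.
Qed.

Lemma Peps_sub adm adm' a eps E E' : adm `<=` adm' -> E `<=` E' ->
  (Peps adm a eps E <= Peps adm' a eps E')%E.
Proof.
move=> sadm sE; apply: Peps_le => s sP; apply: fin_packing_le_Peps.
exact: fin_packing_sub sadm (lexx eps) sE sP.
Qed.

Lemma P0_sub adm adm' a E E' : adm `<=` adm' -> E `<=` E' ->
  (P0 adm a E <= P0 adm' a E')%E.
Proof.
move=> sadm sE; apply: le_ereal_inf_tmp => _ [e e_gt0 <-].
exact: le_trans (P0_le_Peps _ _ _ e_gt0) (Peps_sub a e sadm sE).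
Qed.

Lemma Pmeas_sub adm adm' a E : adm `<=` adm' -> (Pmeas adm a E <= Pmeas adm' a E)%E.
Proof.
move=> sadm; apply: le_ereal_inf_tmp => _ [Es Ecov <-].
apply: (@le_trans _ _ (\sum_(0 <= n <oo) P0 adm a (Es n))%E).
  by apply: ereal_inf_lbound; exists Es.
by apply: lee_nneseries => [n _ _|n _]; [exact: P0_ge0 | exact: P0_sub].
Qed.

Lemma P0_set0 adm a : P0 adm a set0 = 0%E.
Proof.
apply/le_anti; rewrite P0_ge0 andbT; apply: le_trans (P0_le_Peps _ _ _ ltr01) _.
apply: Peps_le => -[|I s] [_ _ sl _]; first by rewrite big_nil.
by have [_ [z []]] := sl I (mem_head _ _).
Qed.

Lemma Pmeas_eq0_cover adm a E (T : countType) (G : T -> set R) :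
  E `<=` \bigcup_t G t -> (forall t, P0 adm a (G t) = 0%E) -> Pmeas adm a E = 0%E.
Proof.
move=> EG G0; apply/le_anti; rewrite Pmeas_ge0 andbT.
pose Es n := if unpickle n is Some t then G t else set0.
apply: (@le_trans _ _ (\sum_(0 <= n <oo) P0 adm a (Es n))%E).
  apply: ereal_inf_lbound; exists Es => // x /EG [t _ Gx].
  by exists (pickle t) => //; rewrite /Es pickleK.
rewrite eseries0 // => n _ _; rewrite /Es.
by case: unpickle => [t|]; [exact: G0 | exact: P0_set0].
Qed.

Lemma Pmeas_fin_cover adm a E : (Pmeas adm a E < +oo)%E ->
  exists2 Es : nat -> set R, E `<=` \bigcup_j Es j & forall j, (P0 adm a (Es j) < +oo)%E.
Proof.
move=> /ereal_inf_lt [_ [Es Ecov <-] sum_fin]; exists Es => // j.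
apply: le_lt_trans sum_fin.
apply: (@le_trans _ _ (\sum_(0 <= i < j.+1) P0 adm a (Es i))%E).
  by rewrite big_nat_recr //= leeDr // sume_ge0 // => i _; exact: P0_ge0.
by apply: nneseries_lim_ge => i _ _; exact: P0_ge0.
Qed.

Lemma dimP_sub adm adm' E : adm `<=` adm' -> (dimP adm E <= dimP adm' E)%E.
Proof.
move=> sadm; apply: ereal_inf_le_tmp => _ [a [a_ge0 Pa0] <-]; exists a => //; split => //.
by apply/le_anti; rewrite Pmeas_ge0 andbT -Pa0 Pmeas_sub.
Qed.

Lemma dimP_le_shift adm adm' E :
  (forall a eps, 0 <= a -> 0 < eps -> Pmeas adm a E = 0%E -> Pmeas adm' (a + eps) E = 0%E) ->
  (dimP adm' E <= dimP adm E)%E.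
Proof.
move=> shift; apply: le_ereal_inf_tmp => _ [a [a_ge0 Pa0] <-].
apply/lee_addgt0Pr => eps eps_gt0; apply: ereal_inf_lbound.
exists (a + eps); last by rewrite EFinD.
by split; [rewrite addr_ge0 // ltW | exact: shift].
Qed.

Lemma P0_eq0_pow adm a E (C rho e1 : R) : 0 <= C -> 0 < rho -> 0 < e1 ->
  (forall eps s, 0 < eps -> eps <= e1 -> fin_packing adm eps E s ->
     \sum_(I <- s) ilen I `^ a <= C * eps `^ rho) ->
  P0 adm a E = 0%E.
Proof.
move=> C_ge0 rho_gt0 e1_gt0 bound; apply/le_anti; rewrite P0_ge0 andbT.
apply/lee_addgt0Pr => eta eta_gt0; rewrite add0e.
pose y := eta / (C + 1).
have y_gt0 : 0 < y by rewrite divr_gt0 // ltr_wpDl.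
pose eps := Num.min e1 (y `^ rho^-1).
have eps_gt0 : 0 < eps by rewrite lt_min e1_gt0 powR_gt0.
have eps_rho : eps `^ rho <= y.
  apply: le_trans (_ : (y `^ rho^-1) `^ rho <= y).
    apply: ge0_ler_powR; rewrite ?nnegrE ?(ltW rho_gt0) ?(ltW eps_gt0) ?powR_ge0 //.
    by rewrite /eps ge_min lexx orbT.
  by rewrite -powRrM mulVf ?gt_eqF // powRr1 // ltW.
apply: le_trans (P0_le_Peps _ _ _ eps_gt0) _; apply: Peps_le => s sP; rewrite lee_fin.
apply: le_trans (bound eps s eps_gt0 _ sP) _; first by rewrite ge_min lexx.
apply: le_trans (ler_wpM2l C_ge0 eps_rho) _.
by rewrite /y mulrA ler_pdivrMr ?ltr_wpDl // mulrDr mulr1 mulrC lerDl ltW.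
Qed.

Lemma P0_finite adm a (e : seq R) F : 0 < a -> F `<=` [set` e] -> P0 adm a F = 0%E.
Proof.
move=> a_gt0 Fe.
apply: (@P0_eq0_pow _ _ _ (size e)%:R a 1) => // eps s eps_gt0 _ sP.
have [us _ sl _] := sP; have pickP := pick_pointP sP.
have size_s : (size s <= size e)%N.
  rewrite -(size_map (pick_point F)); apply: uniq_leq_size.
    rewrite map_inj_in_uniq // => I J Is Js eqIJ.
    apply: (fin_packing_share sP Is Js (pickP I Is).1).
    by rewrite eqIJ; exact: (pickP J Js).1.
  by move=> _ /mapP [I Is ->]; exact/Fe/(pickP I Is).2.
apply: le_trans (_ : \sum_(I <- s) eps `^ a <= _).
  rewrite big_seq [leRHS]big_seq; apply: ler_sum => I Is.
  apply: ge0_ler_powR; rewrite ?nnegrE ?(ltW a_gt0) ?(ltW eps_gt0) ?(sl I Is).1 //.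
  exact/ltW/(fin_packing_ilen_gt0 sP).
have -> : \sum_(I <- s) eps `^ a = eps `^ a *+ size s.
  by rewrite big_const_seq count_predT -Monoid.iteropE.
by rewrite -mulr_natl ler_wpM2r ?powR_ge0 // ler_nat.
Qed.

End Packing.

Section Cylinders.
Variables (R : realType) (N : nat -> nat) (q : nat -> nat -> R).
Hypothesis N_ge2 : forall k, (2 <= N k)%N.
Hypothesis q_gt0 : forall k i, (i < N k)%N -> 0 < q i k.
Hypothesis sum_q : forall k, \sum_(i < N k) q i k = 1.

Definition admissible n (c : nat -> nat) := forall j, (j < n)%N -> (c j < N j)%N.

Definition cyl n c : R * R := (cyl_left q n c, cyl_left q n c + cyl_len q n c).

Lemma ilen_cyl n c : ilen (cyl n c) = cyl_len q n c.
Proof. by rewrite /ilen /= addrAC subrr add0r. Qed.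

Lemma cyl_right n c : (cyl n c).2 = (cyl n c).1 + ilen (cyl n c).
Proof. by rewrite ilen_cyl. Qed.

Lemma cyl_lenS n c : cyl_len q n.+1 c = cyl_len q n c * q (c n) n.
Proof. by rewrite /cyl_len big_ord_recr. Qed.

Lemma cyl0 c : cyl 0 c = (0, 1).
Proof. by rewrite /cyl /cyl_left /cyl_len !big_ord0 add0r. Qed.

Lemma beta0 k : beta q 0 k = 0.
Proof. exact: big_ord0. Qed.

Lemma betaS i k : beta q i.+1 k = beta q i k + q i k.
Proof. exact: big_ord_recr. Qed.

Lemma cylS n c : cyl n.+1 c =
  ((cyl n c).1 + beta q (c n) n * ilen (cyl n c),
   (cyl n c).1 + beta q (c n).+1 n * ilen (cyl n c)).
Proof.
rewrite ilen_cyl /cyl /= /cyl_left big_ord_recr cyl_lenS betaS /=.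
by congr (_, _); rewrite mulrDl addrA [q _ _ * _]mulrC.
Qed.

Lemma admissible_le n m c : (n <= m)%N -> admissible m c -> admissible n c.
Proof. by move=> le_nm vc j lt_jn; apply: vc; exact: leq_trans le_nm. Qed.

Lemma cyl_len_gt0 n c : admissible n c -> 0 < cyl_len q n c.
Proof. by move=> vc; apply: prodr_gt0 => j _; exact/q_gt0/vc. Qed.

Lemma cyl_eq_prefix n c c' : (forall j, (j < n)%N -> c j = c' j) -> cyl n c = cyl n c'.
Proof.
elim: n => [|n IH] eqc; first by rewrite !cyl0.
by rewrite !cylS (IH (fun j lt_jn => eqc j (ltnW lt_jn))) (eqc n (ltnSn n)).
Qed.

Lemma beta_le i j k : (i <= j <= N k)%N -> beta q i k <= beta q j k.
Proof.
case/andP; elim: j => [|j IH]; first by rewrite leqn0 => /eqP ->.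
rewrite leq_eqVlt ltnS => /predU1P [-> //|le_ij lt_jN].
by rewrite betaS (le_trans (IH le_ij (ltnW lt_jN))) // lerDl ltW // q_gt0.
Qed.

Lemma beta_ge0 i k : (i <= N k)%N -> 0 <= beta q i k.
Proof. by move=> le_iN; rewrite -(beta0 k) beta_le. Qed.

Lemma beta_le1 i k : (i <= N k)%N -> beta q i k <= 1.
Proof. by move=> le_iN; rewrite -(sum_q k); apply: (beta_le (j := N k)); rewrite le_iN leqnn. Qed.

Lemma q_lt1 i k : (i < N k)%N -> q i k < 1.
Proof.
move=> lt_iN; pose j := if i == 0%N then 1%N else 0%N.
have lt_jN : (j < N k)%N by rewrite /j; case: (i == 0%N); apply: leq_trans (N_ge2 k).
have neq_ij : Ordinal lt_iN != Ordinal lt_jN.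
  by apply/eqP => -[]; rewrite /j; case: eqP => [->|/eqP ?] // ->.
rewrite -(sum_q k) (bigD1 (Ordinal lt_iN)) //= (bigD1 (Ordinal lt_jN)) 1?eq_sym //=.
rewrite ltrDl ltr_pwDl ?q_gt0 // sumr_ge0 // => -[l lt_lN] _; exact/ltW/q_gt0.
Qed.

Lemma cyl_len_lt1 n c : admissible n.+1 c -> cyl_len q n.+1 c < 1.
Proof.
move=> vc; rewrite cyl_lenS (le_lt_trans _ (q_lt1 (vc n (ltnSn n)))) //.
rewrite ger_pMl ?q_gt0 ?vc // prodr_ile1 // => -[j /ltnW /vc lt_cN] _ /=.
by rewrite (ltW (q_gt0 lt_cN)) (ltW (q_lt1 lt_cN)).
Qed.

Lemma cyl_nest n m c : (n <= m)%N -> admissible m c ->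
  (cyl n c).1 <= (cyl m c).1 /\ (cyl m c).2 <= (cyl n c).2.
Proof.
elim: m => [|m IH]; first by rewrite leqn0 => /eqP ->.
rewrite leq_eqVlt ltnS => /predU1P [-> //|le_nm] vc.
have vcm := admissible_le (leqnSn m) vc.
have [le1 le2] := IH le_nm vcm.
have L_gt0 : 0 < ilen (cyl m c) by rewrite ilen_cyl cyl_len_gt0.
have lt_cN := vc m (ltnSn m).
rewrite cylS /=; split.
  apply: le_trans le1 _; rewrite lerDl; apply: mulr_ge0 (ltW L_gt0).
  exact: beta_ge0 (ltnW lt_cN).
apply: le_trans _ le2; rewrite cyl_right lerD2l ger_pMl //; exact: beta_le1.
Qed.

Lemma oint_cyl_nest n m c x : (n <= m)%N -> admissible m c -> oint (cyl m c) x -> oint (cyl n c) x.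
Proof.
move=> le_nm vc /andP [x1 x2]; have [le1 le2] := cyl_nest le_nm vc.
by apply/andP; split; [exact: le_lt_trans x1 | exact: lt_le_trans le2].
Qed.

Lemma cyl_len_nest n m c : (n <= m)%N -> admissible m c -> cyl_len q m c <= cyl_len q n c.
Proof.
move=> le_nm vc; have [le1 le2] := cyl_nest le_nm vc.
by rewrite -!ilen_cyl /ilen lerB.
Qed.

Lemma cyl_sibling_le n c c' : (forall j, (j < n)%N -> c j = c' j) ->
  (c n < c' n < N n)%N -> admissible n c -> (cyl n.+1 c).2 <= (cyl n.+1 c').1.
Proof.
move=> eqc /andP [lt_cc' lt_c'N] vc; rewrite !cylS (cyl_eq_prefix eqc) /=.
rewrite lerD2l; apply: ler_wpM2r; last by apply: beta_le; rewrite lt_cc' ltnW.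
by rewrite ilen_cyl ltW // cyl_len_gt0 // => j lt_jn; rewrite -eqc // vc.
Qed.

Lemma oint_cyl_digits_eq n c c' x : admissible n c -> admissible n c' ->
  oint (cyl n c) x -> oint (cyl n c') x -> forall j, (j < n)%N -> c j = c' j.
Proof.
elim: n => [//|n IH] vc vc' xc xc'.
have vcn := admissible_le (leqnSn n) vc; have vcn' := admissible_le (leqnSn n) vc'.
have eqc := IH vcn vcn' (oint_cyl_nest (leqnSn n) vc xc) (oint_cyl_nest (leqnSn n) vc' xc').
move=> j; rewrite ltnS leq_eqVlt => /predU1P [->|]; last exact: eqc.
move: xc xc' => /andP [x1 x2] /andP [x1' x2'].
case: (ltngtP (c n) (c' n)) => // lt_cc'.
- have := cyl_sibling_le eqc _ vcn; rewrite lt_cc' vc' //= => /(_ isT) le_cc'.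
  by have := lt_trans (lt_le_trans x2 le_cc') x1'; rewrite ltxx.
- have eqc' j' : (j' < n)%N -> c' j' = c j' by move/eqc.
  have := cyl_sibling_le eqc' _ vcn'; rewrite lt_cc' vc //= => /(_ isT) le_c'c.
  by have := lt_trans (lt_le_trans x2' le_c'c) x1; rewrite ltxx.
Qed.

Lemma beta_bracket k t : 0 <= t <= 1 ->
  exists2 i, (i < N k)%N & beta q i k <= t <= beta q i.+1 k.
Proof.
move=> /andP [t_ge0 t_le1].
have Nk_gt0 : (0 < N k)%N by apply: leq_trans (N_ge2 k).
have ex : exists i, t <= beta q i.+1 k by exists (N k).-1; rewrite prednK // /beta sum_q.
case: (ex_minnP ex) => i t_le min_i.
have le_iN : (i <= (N k).-1)%N by apply: min_i; rewrite prednK // /beta sum_q.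
exists i; first by rewrite (leq_ltn_trans le_iN) // ltn_predL.
rewrite t_le andbT; case: i {le_iN t_le} min_i => [|i] min_i; first by rewrite beta0.
by rewrite leNgt; apply/negP => /ltW /min_i; rewrite ltnn.
Qed.

Lemma closed_cyl_cover x n : 0 <= x <= 1 ->
  exists c, admissible n c /\ (cyl n c).1 <= x <= (cyl n c).2.
Proof.
move=> x01; elim: n => [|n [c [vc /andP [x1 x2]]]].
  by exists (fun=> 0%N); rewrite cyl0.
have L_gt0 : 0 < ilen (cyl n c) by rewrite ilen_cyl cyl_len_gt0.
have t01 : 0 <= (x - (cyl n c).1) / ilen (cyl n c) <= 1.
  apply/andP; split; first by apply: divr_ge0; [rewrite subr_ge0 | exact: ltW].
  by rewrite ler_pdivrMr // mul1r lerBlDl -cyl_right.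
have [i lt_iN /andP [b1 b2]] := beta_bracket n t01.
pose c' j := if j == n then i else c j.
have eqc j : (j < n)%N -> c' j = c j by rewrite /c' => /ltn_eqF ->.
exists c'; split.
  by move=> j; rewrite ltnS leq_eqVlt /c' => /predU1P [->|/[dup] /ltn_eqF -> /vc]; rewrite ?eqxx.
rewrite cylS (cyl_eq_prefix eqc) /c' eqxx /=.
rewrite ler_pdivlMr // in b1; rewrite ler_pdivrMr // in b2.
by rewrite -lerBrDl b1 -lerBlDl b2.
Qed.

Fixpoint cyls n : seq (R * R) :=
  if n is n'.+1 then
    [seq (J.1 + beta q i n' * ilen J, J.1 + beta q i.+1 n' * ilen J)
      | J <- cyls n', i <- iota 0 (N n')]
  else [:: (0, 1)].

Lemma cyl_in_cyls n c : admissible n c -> cyl n c \in cyls n.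
Proof.
elim: n => [|n IH] vc; first by rewrite cyl0 mem_seq1.
rewrite cylS; apply: (allpairs_f (fun J i => (_, _)) (IH (admissible_le (leqnSn n) vc))).
by rewrite mem_iota add0n vc.
Qed.

Definition cyl_ends n := [seq J.1 | J <- cyls n] ++ [seq J.2 | J <- cyls n].

Lemma cyl_ends_cover x n : 0 <= x <= 1 ->
  (forall c, admissible n c -> ~ oint (cyl n c) x) -> x \in cyl_ends n.
Proof.
move=> x01 notin; have [c [vc /andP [x1 x2]]] := closed_cyl_cover n x01.
have cc := cyl_in_cyls vc; rewrite mem_cat.
move: x1; rewrite le_eqVlt => /predU1P [<-|x1]; first by rewrite (map_f fst cc).
move: x2; rewrite le_eqVlt => /predU1P [->|x2]; first by rewrite (map_f snd cc) orbT.
by case: (notin c vc); apply/andP.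
Qed.

Definition in_all_open_cyls x := forall n, exists c, admissible n c /\ oint (cyl n c) x.

Definition digits x : nat -> nat :=
  get [set d | (forall k, (d k < N k)%N) /\ forall n, oint (cyl n d) x].

Lemma digitsP x : in_all_open_cyls x ->
  (forall k, (digits x k < N k)%N) /\ forall n, oint (cyl n (digits x)) x.
Proof.
move=> xin.
suff ex : exists d, (forall k, (d k < N k)%N) /\ forall n, oint (cyl n d) x.
  exact: getPex ex.
have cP n : {c | admissible n c /\ oint (cyl n c) x} by apply: cid; exact: xin.
pose d k := sval (cP k.+1) k.
have eqd n : forall j, (j < n)%N -> d j = sval (cP n) j.
  move=> j lt_jn; have [vj xj] := svalP (cP j.+1); have [vn xn] := svalP (cP n).
  apply: (oint_cyl_digits_eq vj (admissible_le lt_jn vn) xj) => //.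
  exact: oint_cyl_nest lt_jn vn xn.
exists d; split => [k|n]; first by have [vk _] := svalP (cP k.+1); exact: vk k (ltnSn k).
by rewrite (cyl_eq_prefix (eqd n)); have [] := svalP (cP n).
Qed.

Lemma admissible_digits x : in_all_open_cyls x -> forall n, admissible n (digits x).
Proof. by move=> xin n j _; have [vd _] := digitsP xin; exact: vd. Qed.

Lemma q_le_maxq i k : (i < N k)%N -> q i k <= maxq N q k.
Proof. by move=> lt_iN; exact: (le_bigmax 0 (fun j : 'I_(N k) => q j k) (Ordinal lt_iN)). Qed.

Definition min_cyl_len m : R := \prod_(k < m) \prod_(i < N k) q i k.

Lemma min_cyl_len_gt0 m : 0 < min_cyl_len m.
Proof. by apply: prodr_gt0 => k _; apply: prodr_gt0 => -[i lt_iN] _; exact: q_gt0. Qed.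

Lemma min_cyl_len_le m c : admissible m c -> min_cyl_len m <= cyl_len q m c.
Proof.
move=> vc; apply: ler_prod => -[k lt_km] _; have lt_cN := vc k lt_km.
rewrite ltW /=; last by apply: prodr_gt0 => -[i lt_iN] _; exact: q_gt0.
rewrite (bigD1 (Ordinal lt_cN)) //= ger_pMr ?q_gt0 //.
by apply: prodr_ile1 => -[i lt_iN] _; rewrite (ltW (q_gt0 lt_iN)) (ltW (q_lt1 lt_iN)).
Qed.

Section Stopping.
Hypothesis prod_maxq_cvg0 : (fun n => \prod_(k < n) maxq N q k) @ \oo --> (0 : R).

Lemma cyl_len_small d r : (forall k, (d k < N k)%N) -> 0 < r -> exists n, cyl_len q n d <= r.
Proof.
move=> vd r_gt0; have /cvgr0Pnorm_lt /(_ r r_gt0) [n0 _ small] := prod_maxq_cvg0.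
exists n0; apply: le_trans (ltW (le_lt_trans (ler_norm _) (small n0 (leqnn n0)))).
by apply: ler_prod => k _; rewrite (ltW (q_gt0 (vd k))) q_le_maxq.
Qed.

Definition stop_rank x r : nat := get [set n | cyl_len q n (digits x) <= r /\
  forall k, cyl_len q k (digits x) <= r -> (n <= k)%N].

Lemma stop_rankP x r : in_all_open_cyls x -> 0 < r ->
  cyl_len q (stop_rank x r) (digits x) <= r /\
  forall k, cyl_len q k (digits x) <= r -> (stop_rank x r <= k)%N.
Proof.
move=> xin r_gt0; have [vd _] := digitsP xin.
have [n small] := cyl_len_small vd r_gt0.
suff ex : exists n, cyl_len q n (digits x) <= r /\
    forall k, cyl_len q k (digits x) <= r -> (n <= k)%N.
  exact: getPex ex.
have ex_small : exists n, cyl_len q n (digits x) <= r by exists n.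
by case: (ex_minnP ex_small) => m small_m min_m; exists m.
Qed.

Definition stop_cyl x r := cyl (stop_rank x r) (digits x).

Lemma stop_cyl_mem x r : in_all_open_cyls x -> oint (stop_cyl x r) x.
Proof. by move=> xin; have [_ xd] := digitsP xin; exact: xd. Qed.

Lemma ilen_stop_cyl_le x r : in_all_open_cyls x -> 0 < r -> ilen (stop_cyl x r) <= r.
Proof. by move=> xin r_gt0; rewrite ilen_cyl; have [] := stop_rankP xin r_gt0. Qed.

Lemma stop_cyl_interior x r : in_all_open_cyls x -> 0 < r < 1 ->
  cyl_interiors N q (stop_cyl x r).
Proof.
move=> xin /andP [r_gt0 r_lt1]; have [len_le _] := stop_rankP xin r_gt0.
exists (stop_rank x r), (digits x); split; last by split => //; exact: admissible_digits.
by rewrite lt0n; apply: contraTneq len_le => ->; rewrite /cyl_len big_ord0 -ltNge.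
Qed.

Lemma stop_cyl_eq_or_disjoint x y r : in_all_open_cyls x -> in_all_open_cyls y -> 0 < r ->
  stop_cyl x r <> stop_cyl y r -> oint (stop_cyl x r) `&` oint (stop_cyl y r) = set0.
Proof.
move=> xin yin r_gt0 neq; apply/seteqP; split => // z [zx zy]; apply: neq.
wlog le_xy : x y xin yin zx zy / (stop_rank x r <= stop_rank y r)%N.
  move=> hwlog; case: (leqP (stop_rank x r) (stop_rank y r)) => [|/ltnW le_yx].
    exact: hwlog.
  by apply/esym; exact: hwlog.
have vx := admissible_digits xin; have vy := admissible_digits yin.
have zyx : oint (cyl (stop_rank x r) (digits y)) z := oint_cyl_nest le_xy (vy _) zy.
have eq_xy := cyl_eq_prefix (oint_cyl_digits_eq (vx _) (vy _) zx zyx).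
have [len_x _] := stop_rankP xin r_gt0; have [_ min_y] := stop_rankP yin r_gt0.
have le_yx : (stop_rank y r <= stop_rank x r)%N.
  by apply: min_y; rewrite -ilen_cyl -eq_xy ilen_cyl.
have eq_rank : stop_rank y r = stop_rank x r by apply/eqP; rewrite eqn_leq le_yx le_xy.
by rewrite /stop_cyl eq_rank eq_xy.
Qed.

Lemma stop_cyls_packing F (eps0 r : R) s :
  F `<=` in_all_open_cyls -> 0 < r < 1 -> r <= eps0 -> fin_packing setT r F s ->
  fin_packing (cyl_interiors N q) eps0 F
    (undup [seq stop_cyl (pick_point F J) r | J <- s]).
Proof.
move=> Fin r01 le_r sP; have pickP := pick_pointP sP.
have [r_gt0 _] := andP r01.
have xin I : I \in s -> in_all_open_cyls (pick_point F I) by move=> /pickP [_ /Fin].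
split.
- exact: undup_uniq.
- by move=> _ /[!mem_undup] /mapP [I Is ->]; exact: stop_cyl_interior (xin I Is) r01.
- move=> _ /[!mem_undup] /mapP [I Is ->]; split.
    exact: le_trans (ilen_stop_cyl_le (xin I Is) r_gt0) le_r.
  by exists (pick_point F I); split; [exact: stop_cyl_mem (xin I Is) | exact: (pickP I Is).2].
- move=> _ _ /[!mem_undup] /mapP [I Is ->] /mapP [J Js ->].
  exact: stop_cyl_eq_or_disjoint (xin I Is) (xin J Js) r_gt0.
Qed.

Hypothesis ln_ratio_cvg0 : forall d : nat -> nat, (forall k, (d k < N k)%N) ->
  (fun k => ln (q (d k) k) / ln (\prod_(j < k) q (d j) j)) @ \oo --> (0 : R).

Definition digit_regular (del : R) m x := in_all_open_cyls x /\
  forall n, (m <= n)%N -> cyl_len q n (digits x) `^ del <= q (digits x n) n.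

Lemma digit_regular_exists del x : 0 < del -> in_all_open_cyls x ->
  exists m, digit_regular del m x.
Proof.
move=> del_gt0 xin; have [vd _] := digitsP xin.
have /cvgr0Pnorm_lt /(_ del del_gt0) [n0 _ small] := ln_ratio_cvg0 vd.
exists n0.+1; split => // -[//|n] lt_n0n.
have P_gt0 : 0 < cyl_len q n.+1 (digits x) by exact/cyl_len_gt0/admissible_digits.
have lnP_lt0 : ln (cyl_len q n.+1 (digits x)) < 0.
  by rewrite ln_lt0 // P_gt0 cyl_len_lt1 // admissible_digits.
have := le_lt_trans (ler_norm _) (small n.+1 (ltnW lt_n0n)).
rewrite /= ltr_ndivrMr // => ln_lt.
rewrite /powR (gt_eqF P_gt0) -[leRHS]lnK ?posrE ?q_gt0 // ler_expR.
exact: ltW ln_lt.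
Qed.

Lemma ilen_stop_cyl_ge del m x r : 0 <= del -> digit_regular del m x ->
  0 < r -> r < min_cyl_len m -> r `^ (1 + del) <= ilen (stop_cyl x r).
Proof.
move=> del_ge0 [xin reg] r_gt0 r_lt; have [len_le min_rank] := stop_rankP xin r_gt0.
have vd := admissible_digits xin.
rewrite ilen_cyl; case: (leqP (stop_rank x r) m) => [le_rank|].
  have := le_trans (min_cyl_len_le (vd m)) (le_trans (cyl_len_nest le_rank (vd m)) len_le).
  by move=> /(lt_le_trans r_lt); rewrite ltxx.
move: len_le min_rank; case: (stop_rank x r) => [//|n] len_le min_rank lt_mn.
have r_lt_n : r < cyl_len q n (digits x).
  by rewrite ltNge; apply/negP => /min_rank; rewrite ltnn.
have Pn_gt0 := cyl_len_gt0 (vd n).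
rewrite cyl_lenS; apply: (@le_trans _ _ (cyl_len q n (digits x) `^ (1 + del))).
  by apply: ge0_ler_powR; rewrite ?nnegrE ?addr_ge0 ?(ltW r_gt0) ?(ltW Pn_gt0) ?(ltW r_lt_n).
rewrite powRD ?(gt_eqF Pn_gt0) ?implybT // powRr1 ?(ltW Pn_gt0) //.
by rewrite ler_wpM2l ?(ltW Pn_gt0) //; apply: reg; rewrite -ltnS.
Qed.

Section KeyEstimate.
Variables (del alpha beta : R) (m : nat) (F : set R).
Hypothesis del_ge0 : 0 <= del.
Hypothesis alpha_ge0 : 0 <= alpha.
Hypothesis beta_gt : (1 + del) * alpha < beta.
Hypothesis F_regular : F `<=` digit_regular del m.

Let rho := beta - (1 + del) * alpha.

Let rho_gt0 : 0 < rho.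
Proof. by rewrite subr_gt0. Qed.

Lemma pow_le_stop_cyl x r l : digit_regular del m x -> 0 < r -> r < min_cyl_len m ->
  0 <= l <= r -> l `^ beta <= r `^ rho * ilen (stop_cyl x r) `^ alpha.
Proof.
move=> xreg r_gt0 r_lt_min /andP [l_ge0 l_le].
have beta_ge0 : 0 <= beta by apply: le_trans (ltW beta_gt); rewrite mulr_ge0 // addr_ge0.
apply: (@le_trans _ _ (r `^ beta)).
  by apply: ge0_ler_powR; rewrite ?nnegrE ?(ltW r_gt0).
rewrite -{1}(subrK ((1 + del) * alpha) beta) -/rho powRD ?(gt_eqF r_gt0) ?implybT //.
have stop_ge := ilen_stop_cyl_ge del_ge0 xreg r_gt0 r_lt_min.
apply: ler_wpM2l; first exact: powR_ge0.
rewrite powRrM; apply: ge0_ler_powR; rewrite ?nnegrE ?powR_ge0 //.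
exact: le_trans (powR_ge0 _ _) stop_ge.
Qed.

Section PackingBound.
Variables (eps0 M : R).
Hypothesis cyl_packing_bound : forall t, fin_packing (cyl_interiors N q) eps0 F t ->
  \sum_(J <- t) ilen J `^ alpha <= M.

(* Each interval is charged to the stopping cylinder of one of its points: these cylinders
   form a cylinder packing, are not shorter than r^(1+del), and are charged at most thrice. *)
Lemma scale_class_bound r s : 0 < r -> r <= eps0 -> r < 1 -> r < min_cyl_len m ->
  fin_packing setT r F s -> {in s, forall I, r / 2 < ilen I} ->
  \sum_(I <- s) ilen I `^ beta <= 3 * M * r `^ rho.
Proof.
move=> r_gt0 r_le r_lt1 r_lt_min sP long.
have Fin : F `<=` in_all_open_cyls by move=> x /F_regular [].
have [_ _ slen _] := sP; have pickP := pick_pointP sP.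
pose f I := stop_cyl (pick_point F I) r; pose t := undup (map f s).
have tP : fin_packing (cyl_interiors N q) eps0 F t.
  by apply: stop_cyls_packing Fin _ r_le sP; rewrite r_gt0 r_lt1.
have fin I : I \in s -> in_all_open_cyls (pick_point F I) by move=> /pickP [_ /Fin].
have pow_le I : I \in s -> ilen I `^ beta <= r `^ rho * ilen (f I) `^ alpha.
  move=> Is; apply: pow_le_stop_cyl (F_regular (pickP I Is).2) r_gt0 r_lt_min _.
  by rewrite (ltW (fin_packing_ilen_gt0 sP Is)) (slen I Is).1.
have fiber_le3 y : y \in t -> (count_mem y (map f s) <= 3)%N.
  rewrite mem_undup => /mapP [I0 I0s ->]; rewrite count_map.
  apply: (count_meeting_le3 sP long); first exact: ilen_stop_cyl_le (fin I0 I0s) r_gt0.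
  move=> I Is /eqP fI; exists (pick_point F I); split; first exact: (pickP I Is).1.
  by rewrite -/(f I0) -fI; exact: stop_cyl_mem (fin I Is).
have undup_sum : \sum_(y <- t) ilen y `^ alpha *+ count_mem y (map f s) =
    \sum_(y <- map f s) ilen y `^ alpha.
  exact: big_undup_iterop_count.
apply: (@le_trans _ _ (\sum_(I <- s) r `^ rho * ilen (f I) `^ alpha)).
  by rewrite big_seq [leRHS]big_seq; apply: ler_sum.
rewrite -mulr_sumr -(big_map f xpredT (fun y => ilen y `^ alpha)) -undup_sum.
rewrite mulrC ler_wpM2r ?powR_ge0 //.
apply: (@le_trans _ _ (\sum_(y <- t) ilen y `^ alpha *+ 3)).
  rewrite big_seq [leRHS]big_seq; apply: ler_sum => y yt.
  by apply: ler_wpMn2l; [exact: powR_ge0 | exact: fiber_le3].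
by rewrite sumrMnl mulr_natl; apply: ler_wMn2r; exact: cyl_packing_bound.
Qed.

Lemma packing_pow_bound eps s : 0 < eps -> eps <= eps0 -> eps < 1 -> eps < min_cyl_len m ->
  fin_packing setT eps F s ->
  \sum_(I <- s) ilen I `^ beta <= 3 * M * (1 - 2^-1 `^ rho)^-1 * eps `^ rho.
Proof.
move=> eps_gt0 eps_le eps_lt1 eps_lt_min sP; have [_ _ slen _] := sP.
have M_ge0 : 0 <= M by have := cyl_packing_bound (fin_packing_nil _ _ _); rewrite big_nil.
pose x : R := 2^-1 `^ rho.
pose cls k I := (eps / 2 ^+ k.+1 < ilen I) && (ilen I <= eps / 2 ^+ k).
have [K split_sum] : exists K, \sum_(I <- s) ilen I `^ beta <=
    \sum_(k < K) \sum_(I <- s | cls k I) ilen I `^ beta.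
  apply: sum_le_sum_classes => [I|I Is]; first exact: powR_ge0.
  have [k /andP [lo hi]] := dyadic_scale (fin_packing_ilen_gt0 sP Is) (slen I Is).1.
  by exists k; rewrite /cls lo hi.
have class_le k : \sum_(I <- s | cls k I) ilen I `^ beta <= 3 * M * eps `^ rho * x ^+ k.
  have two_k_gt0 : 0 < 2 ^+ k :> R by rewrite exprn_gt0.
  have r_gt0 : 0 < eps / 2 ^+ k by rewrite divr_gt0.
  have r_le : eps / 2 ^+ k <= eps.
    by rewrite ler_pdivrMr // ler_peMr ?(ltW eps_gt0) // exprn_ege1 // ler1n.
  rewrite -big_filter -mulrA -powR_dyadic ?(ltW eps_gt0) //.
  apply: (scale_class_bound r_gt0 _ _ _ (fin_packing_filter sP _)).
  - exact: le_trans r_le eps_le.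
  - exact: le_lt_trans r_le eps_lt1.
  - exact: le_lt_trans r_le eps_lt_min.
  - by move=> I _ /andP [].
  - move=> I; rewrite mem_filter => /andP [/andP [lo _] _].
    by rewrite -mulrA -invfM -exprSr.
apply: (le_trans split_sum).
apply: (@le_trans _ _ (\sum_(k < K) 3 * M * eps `^ rho * x ^+ k)).
  by apply: ler_sum => k _; exact: class_le.
rewrite [leRHS]mulrAC; have := @geometric_le_lim _ K (3 * M * eps `^ rho) x.
rewrite seriesEnat /= big_mkord; apply.
- by rewrite mulr_ge0 ?mulr_ge0 ?powR_ge0.
- exact: powR_gt0.
- by rewrite ger0_norm ?powR_ge0 // powR_half_lt1.
Qed.

End PackingBound.

Lemma P0_regular_eq0 : (P0 (cyl_interiors N q) alpha F < +oo)%E -> P0 setT beta F = 0%E.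
Proof.
move=> /ereal_inf_lt [_ [eps0 eps0_gt0 <-] Peps_lt].
have Peps_fin : Peps (cyl_interiors N q) alpha eps0 F \is a fin_num.
  by rewrite ge0_fin_numE // Peps_ge0.
pose M := fine (Peps (cyl_interiors N q) alpha eps0 F).
have bound t : fin_packing (cyl_interiors N q) eps0 F t -> \sum_(J <- t) ilen J `^ alpha <= M.
  by move=> tP; rewrite -lee_fin /M fineK // fin_packing_le_Peps.
have M_ge0 : 0 <= M by have := bound _ (fin_packing_nil _ _ _); rewrite big_nil.
pose e1 := Num.min eps0 (Num.min (min_cyl_len m / 2) 2^-1).
have e1_lt1 : e1 < 1 by rewrite /e1 !gt_min invf_lt1 ?ltr1n ?orbT.
have e1_lt_min : e1 < min_cyl_len m.
  by rewrite /e1 !gt_min ltr_pdivrMr ?ltr_pMr ?min_cyl_len_gt0 ?ltr1n ?orbT.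
apply: (@P0_eq0_pow _ _ _ _ (3 * M * (1 - 2^-1 `^ rho)^-1) rho e1).
- by rewrite !mulr_ge0 // invr_ge0 subr_ge0 ltW // powR_half_lt1.
- exact: rho_gt0.
- by rewrite /e1 !lt_min eps0_gt0 divr_gt0 ?min_cyl_len_gt0 // invr_gt0 ltr0n.
- move=> eps s eps_gt0 eps_le sP; apply: (packing_pow_bound (s := s) bound eps_gt0 _ _ _ sP).
  + by apply: le_trans eps_le _; rewrite ge_min lexx.
  + exact: le_lt_trans eps_le e1_lt1.
  + exact: le_lt_trans eps_le e1_lt_min.
Qed.

End KeyEstimate.

Lemma Pmeas_cyl_eq0_shift E a eps : E `<=` `[0, 1] -> 0 <= a -> 0 < eps ->
  Pmeas (cyl_interiors N q) a E = 0%E -> Pmeas setT (a + eps) E = 0%E.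
Proof.
move=> E01 a_ge0 eps_gt0 Pa0.
have [Es Ecov Es_fin] : exists2 Es : nat -> set R, E `<=` \bigcup_j Es j &
    forall j, (P0 (cyl_interiors N q) a (Es j) < +oo)%E.
  by apply: Pmeas_fin_cover; rewrite Pa0 ltry.
pose del := eps / (a + 1).
have del_gt0 : 0 < del by rewrite divr_gt0 // ltr_wpDl.
have shift_gt : (1 + del) * a < a + eps.
  rewrite mulrDl mul1r ltrD2l /del mulrAC ltr_pdivrMr ?ltr_wpDl //.
  by rewrite ltr_pM2l // ltrDl.
(* Points in the interior of cylinders of every rank are digit-regular from some rank on;
   the other points of [0, 1] are cylinder endpoints. *)
pose G (p : (nat * nat) + nat) : set R :=
  match p with inl (j, k) => Es j `&` digit_regular del k | inr n => [set` cyl_ends n] end.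
apply: (Pmeas_eq0_cover (G := G)) => [x Ex|[[j k]|n]].
- have x01 : 0 <= x <= 1 by move: (E01 x Ex); rewrite /= in_itv.
  have [xin|] := pselect (in_all_open_cyls x).
    have [k xreg] := digit_regular_exists del_gt0 xin; have [j _ Esx] := Ecov x Ex.
    by exists (inl (j, k)) => //; split.
  move=> /existsNP [n /forallNP notin]; exists (inr n) => //=.
  by apply: cyl_ends_cover x01 _ => c vc xc; exact: notin c (conj vc xc).
- apply: (P0_regular_eq0 (ltW del_gt0) a_ge0 shift_gt (@subIsetr _ (Es j) _)).
  by apply: le_lt_trans (Es_fin j); apply: P0_sub => //; exact: subIsetl.
- by apply: (@P0_finite _ _ _ (cyl_ends n)) => //; rewrite ltr_wpDl.
Qed.

End Stopping.

End Cylinders.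

Theorem lemma1 (R : realType) (N : nat -> nat) (q : nat -> nat -> R) :
  Qexpansion N q ->
  (forall d : nat -> nat, (forall k, (d k < N k)%N) ->
     (fun k => ln (q (d k) k) / ln (\prod_(j < k) q (d j) j)) @ \oo --> (0 : R)) ->
  forall E : set R, E `<=` `[0, 1] ->
    dimP (cyl_interiors N q) E = dimP setT E.
Proof.
move=> [N_ge2 q_gt0 sum_q prod_maxq_cvg0] ln_ratio_cvg0 E E01.
apply/le_anti/andP; split; first exact: dimP_sub.
apply: dimP_le_shift => a eps a_ge0 eps_gt0.
exact: (Pmeas_cyl_eq0_shift N_ge2 q_gt0 sum_q prod_maxq_cvg0 ln_ratio_cvg0 E01 a_ge0 eps_gt0).
Qed.
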